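(* Let $G$ be a graph and let $k,m\geq 1$ be integers. Then $k$ cops have a winning strategy on $G$ in the game against $m$ robbers if and only if $k$ cops have a winning strategy on $G$ in the game against a single robber.
   Context: All graphs are finite, simple, connected and reflexive (every vertex is considered adjacent to itself, so a player may stay in place). The game of $k$ cops and $m$ robbers on $G$: in round 0 the cops first choose starting vertices, then the robbers choose theirs. In each round $i\geq 1$, all $k$ cops move (each to an adjacent vertex or staying), then all $m$ robbers move likewise. Several players may occupy the same vertex. Whenever a cop and some robbers occupy the same vertex, those robbers are captured and take no further part in the game (robbers are captured one by one; they need not be captured simultaneously). Both sides have full information. The cops win if all robbers are captured after finitely many rounds; otherwise the robbers win. $G$ is $k$-cop-win if $k$ cops have a winning strategy against one robber; $1$-cop-win graphs are called cop-win. *)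

From mathcomp Require Import all_boot.
Set Implicit Arguments. Unset Strict Implicit. Unset Printing Implicit Defensive.

Section CopsRobbers.
Variables (T : finType) (e : rel T).

Definition adj (x y : T) : bool := (x == y) || e x y.

(* positions: cops are always on the board; a robber is [Some v] on vertex v,
   or [None] once captured *)
Definition cop_pos (k : nat) := {ffun 'I_k -> T}.
Definition rob_pos (m : nat) := {ffun 'I_m -> option T}.

Definition capture k m (c : cop_pos k) (r : rob_pos m) : rob_pos m :=
  [ffun j => if r j is Some v then
               (if [exists i, c i == v] then None else Some v)
             else None].

Definition cop_move k (c c' : cop_pos k) : Prop := forall i, adj (c i) (c' i).

(* robbers' half-round: cops are at c (already moved), robbers were at r. *)
Definition rob_step k m (c : cop_pos k) (r r' : rob_pos m) : Prop :=
  forall j, match capture c r j with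
            | None => r' j = None
            | Some v => exists v', adj v v' /\
                          r' j = (if [exists i, c i == v'] then None else Some v')
            end.

(* a cop strategy maps the full history (positions at the end of rounds
   0..n-1) to the cops' positions in round n (round 0: starting vertices) *)
Definition cop_strategy k m := seq (cop_pos k * rob_pos m) -> cop_pos k.

Definition history k m (C : nat -> cop_pos k) (R : nat -> rob_pos m) n :=
  [seq (C i, R i) | i <- iota 0 n].

(* C n = cops' positions after their move in round n,
   R n = robbers' positions (None = captured) at the end of round n. *)
Definition consistent k m (s : cop_strategy k m)
    (C : nat -> cop_pos k) (R : nat -> rob_pos m) : Prop :=
  [/\ forall n, C n = s (history C R n),
      exists p : {ffun 'I_m -> T}, R 0 = capture (C 0) [ffun j => Some (p j)]
    & forall n, rob_step (C n.+1) (R n) (R n.+1)].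

Definition winning k m (s : cop_strategy k m) : Prop :=
  forall C R, consistent s C R ->
    (forall n, cop_move (C n) (C n.+1)) /\
    exists n, forall j, R n j = None.

Definition cops_win (k m : nat) : Prop := exists s : cop_strategy k m, winning s.

End CopsRobbers.

From mathcomp Require Import all_boot.
From Stdlib Require Import ClassicalEpsilon.
Set Implicit Arguments. Unset Strict Implicit. Unset Printing Implicit Defensive.

(* A strategy winning against m robbers that all shadow a single one wins
   against that robber.  Conversely, rank a position (cops at c and to move,
   robber at r) by the least number of rounds within which the cops can force
   a capture.  Against a winning one-robber strategy the robber cannot keep to
   unranked positions, so every position with the strategy's initial cop
   configuration is ranked; since the cops can walk to that configuration,
   every position is ranked.  Against m robbers the cops always make the
   rank-decreasing move against the first robber still free: each round
   either captures somebody or lowers that robber's rank. *)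

Lemma uniform_bound (A : finType) (Q : nat -> A -> bool) :
  (forall n n' x, n <= n' -> Q n x -> Q n' x) ->
  (forall x, exists n, Q n x) -> exists N, forall x, Q N x.
Proof.
move=> Qmono /fin_all_exists [f Qf]; exists (\max_x f x) => x.
by apply: Qmono (Qf x); exact: leq_bigmax.
Qed.

Section CopsAndRobbers.
Variables (T : finType) (e : rel T).

Lemma history_succ k m (C : nat -> cop_pos T k) (R : nat -> rob_pos T m) n :
  history C R n.+1 = rcons (history C R n) (C n, R n).
Proof. by rewrite /history -[n.+1]addn1 iotaD map_cat cats1. Qed.

Lemma cops_win_one_robber k m : 0 < m -> cops_win e k m -> cops_win e k 1.
Proof.
move=> m_gt0 [s s_win].
pose shadow (x : cop_pos T k * rob_pos T 1) : cop_pos T k * rob_pos T m :=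
  (x.1, [ffun=> x.2 ord0]).
exists (fun h => s (map shadow h)) => C R [C_s [p R0] R_step].
pose R' n : rob_pos T m := [ffun=> R n ord0].
have play' : consistent e s C R'.
  split.
  - by move=> n; rewrite C_s /history -map_comp.
  - by exists [ffun=> p ord0]; apply/ffunP=> j; rewrite !ffunE R0 !ffunE.
  - by move=> n j; have := R_step n ord0; rewrite /capture !ffunE.
have [moves [n caught]] := s_win C R' play'.
split=> //; exists n => j.
by have := caught (Ordinal m_gt0); rewrite ffunE (ord1 j).
Qed.

Section FixedCops.
Variable k : nat.
Local Notation cops := (cop_pos T k).

Definition covered (c : cops) (v : T) : bool := [exists i, c i == v].

Definition cop_moveb (c c' : cops) : bool := [forall i, adj e (c i) (c' i)].

Lemma cop_moveP c c' : reflect (cop_move e c c') (cop_moveb c c').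
Proof. exact: forallP. Qed.

Lemma cop_moveb_refl c : cop_moveb c c.
Proof. by apply/cop_moveP=> i; rewrite /adj eqxx. Qed.

Fixpoint catch_within (n : nat) (c : cops) (r : T) : bool :=
  if n is n'.+1 then
    [exists c', cop_moveb c c' &&
       (covered c' r ||
        [forall r', adj e r r' ==> covered c' r' || catch_within n' c' r'])]
  else false.

Lemma catch_within_succ n c r :
  catch_within n.+1 c r =
  [exists c', cop_moveb c c' &&
     (covered c' r ||
      [forall r', adj e r r' ==> covered c' r' || catch_within n c' r'])].
Proof. by []. Qed.

Lemma catch_withinS n c r : catch_within n c r -> catch_within n.+1 c r.
Proof.
elim: n c r => // n IH c r.
rewrite catch_within_succ => /existsP [c' /andP [move_c' catch]].
rewrite catch_within_succ; apply/existsP; exists c'; rewrite move_c'.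
case/orP: catch => [-> //|/forallP catch]; apply/orP; right.
apply/forallP=> r'; apply/implyP=> adj_r'.
by case/orP: (implyP (catch r') adj_r') => [-> //|/IH catch']; apply/orP; right.
Qed.

Lemma catch_within_mono n n' c r :
  n <= n' -> catch_within n c r -> catch_within n' c r.
Proof.
move/subnK <-; elim: (n' - n) => // d IH catch.
by rewrite addSn; exact/catch_withinS/IH.
Qed.

Definition catches_all (c : cops) : Prop :=
  forall r, exists n, catch_within n c r.

Lemma catches_all_backward (c c' : cops) :
  cop_moveb c c' -> catches_all c' -> catches_all c.
Proof.
move=> move_c' /(uniform_bound (fun n n' => @catch_within_mono n n' c')) [N catchN] r.
exists N.+1; rewrite catch_within_succ; apply/existsP; exists c'; rewrite move_c'.
by apply/orP; right; apply/forallP=> r'; rewrite catchN !orbT implybT.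
Qed.

Definition relocate (c : cops) (i : 'I_k) (y : T) : cops :=
  [ffun j => if j == i then y else c j].

Lemma catches_all_relocate (c : cops) i y :
  connect e (c i) y -> catches_all (relocate c i y) -> catches_all c.
Proof.
case/connectP=> p; elim: p c => [|z p IH] c /=.
  move=> _ ->; suff -> : relocate c i (c i) = c by [].
  by apply/ffunP=> j; rewrite ffunE; case: eqP => // ->.
case/andP=> ciz path_p y_last.
have relocate_twice w : relocate (relocate c i z) i w = relocate c i w.
  by apply/ffunP=> j; rewrite !ffunE; case: eqP.
move=> catch; apply: (@catches_all_backward _ (relocate c i z)).
  apply/cop_moveP=> j; rewrite ffunE.
  by case: eqP => [->|_]; rewrite /adj ?ciz ?orbT ?eqxx.
by apply: (IH (relocate c i z)); rewrite ?ffunE ?eqxx ?relocate_twice.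
Qed.

Lemma catches_all_everywhere c0 :
  (forall x y : T, connect e x y) -> catches_all c0 -> forall c : cops, catches_all c.
Proof.
move=> e_conn catch0.
suff ind a (c : cops) : #|[set i | c i != c0 i]| = a -> catches_all c.
  by move=> c; exact: ind.
elim: a c => [|a IH] c diff_c.
  suff -> : c = c0 by [].
  apply/ffunP=> i; apply/eqP; apply: contraT => ci.
  by move: diff_c; rewrite (cardD1 i) inE ci.
have [i ci] : exists i, i \in [set i | c i != c0 i].
  by apply/set0Pn; apply/eqP => diff0; rewrite diff0 cards0 in diff_c.
apply: (catches_all_relocate (e_conn (c i) (c0 i))); apply: IH.
move: diff_c; rewrite (cardsD1 i) ci add1n => -[<-].
apply: eq_card => j; rewrite !inE !ffunE.
by case: (eqVneq j i) => [->|]; rewrite ?eqxx.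
Qed.

Definition evading (c : cops) (v : T) : Prop := forall n, ~~ catch_within n c v.

Definition safe (c : cops) (v : T) : Prop := ~~ covered c v /\ evading c v.

Lemma evading_step c c' v : evading c v -> cop_moveb c c' ->
  ~~ covered c' v /\ exists2 v', adj e v v' & safe c' v'.
Proof.
move=> ev move_c'.
have c'v : ~~ covered c' v.
  apply: contra (ev 1) => c'v.
  by apply/existsP; exists c'; rewrite move_c' c'v.
(* Otherwise a common bound on how fast each reply is caught would make
   (c, v) a position won within finitely many rounds. *)
split=> //; apply: NNPP => stuck.
pose Q n v' := adj e v v' ==> covered c' v' || catch_within n c' v'.
have Qmono n n' v' : n <= n' -> Q n v' -> Q n' v'.
  move=> le_nn' /implyP Qv; apply/implyP=> adj_v'.
  by case/orP: (Qv adj_v') => [-> //|/(catch_within_mono le_nn') ->]; rewrite orbT.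
have Qall v' : exists n, Q n v'.
  case: (boolP (adj e v v')) => [adj_v'|nadj]; last first.
    by exists 0; rewrite /Q (negbTE nadj).
  case: (boolP (covered c' v')) => [c'v'|c'v'].
    by exists 0; rewrite /Q c'v' implybT.
  apply: NNPP => noQ; apply: stuck; exists v' => //; split=> // n.
  by apply/negP=> catch; apply: noQ; exists n; rewrite /Q catch orbT implybT.
have [N QN] := uniform_bound Qmono Qall.
move: (ev N.+1); rewrite catch_within_succ; apply/negP/negPn.
by apply/existsP; exists c'; rewrite move_c' (negbTE c'v); apply/forallP.
Qed.

Lemma evading_uncovered c v : evading c v -> ~~ covered c v.
Proof. by move=> ev; case: (evading_step ev (cop_moveb_refl c)). Qed.

(* The fallback to an unsafe neighbour keeps every robber move legal even
   before we know that the play never leaves evading positions. *)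
Definition sound_reply (c : cops) (v w : T) : Prop :=
  adj e v w /\ ((exists2 w', adj e v w' & safe c w') -> safe c w).

Definition evade (c : cops) (v : T) : T := epsilon (inhabits v) (sound_reply c v).

Lemma evade_spec c v : sound_reply c v (evade c v).
Proof.
apply: epsilon_spec.
have [[w adj_w safe_w]|none] := classic (exists2 w, adj e v w & safe c w).
  by exists w; split=> // _.
by exists v; rewrite /sound_reply /adj eqxx; split=> // /none.
Qed.

Section EvasionPlay.
Variables (s : cop_strategy T k 1) (r0 : T).

Definition evader_move (c : cops) (o : option T) : option T :=
  if o is Some v then
    if covered c v then None else
    if covered c (evade c v) then None else Some (evade c v)
  else None.

Definition evader_reply (h : seq (cops * rob_pos T 1)) (c : cops) : rob_pos T 1 :=
  if h is x :: h' then [ffun j => evader_move c ((last x h').2 j)]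
  else capture c [ffun=> Some r0].

Definition evader_history (n : nat) : seq (cops * rob_pos T 1) :=
  iter n (fun h => rcons h (s h, evader_reply h (s h))) [::].

Definition evader_cops (n : nat) : cops := s (evader_history n).

Definition evader_robber (n : nat) : rob_pos T 1 :=
  evader_reply (evader_history n) (evader_cops n).

Lemma evader_historyE n : history evader_cops evader_robber n = evader_history n.
Proof.
by elim: n => // n IH; rewrite history_succ IH.
Qed.

Lemma evader_robberS n :
  evader_robber n.+1 = [ffun j => evader_move (evader_cops n.+1) (evader_robber n j)].
Proof.
have -> : evader_robber n.+1 = evader_reply
    (rcons (evader_history n) (evader_cops n, evader_robber n)) (evader_cops n.+1) by [].
by case: (evader_history n) => [|x h] //=; rewrite last_rcons.
Qed.

Lemma evader_consistent : consistent e s evader_cops evader_robber.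
Proof.
split.
- by move=> n; rewrite evader_historyE.
- by exists [ffun=> r0]; congr capture; apply/ffunP=> j; rewrite !ffunE.
- move=> n j; rewrite evader_robberS /capture !ffunE /evader_move.
  case: (evader_robber n j) => [v|] //; rewrite -/(covered _ v).
  case: ifP => // _; exists (evade (evader_cops n.+1) v).
  by case: (evade_spec (evader_cops n.+1) v).
Qed.

Lemma evader_survives :
  evading (s [::]) r0 -> (forall n, cop_moveb (evader_cops n) (evader_cops n.+1)) ->
  forall n, exists2 v, evading (evader_cops n) v & evader_robber n ord0 = Some v.
Proof.
move=> ev0 moves; elim=> [|n [v ev_v Rv]].
  exists r0 => //; rewrite /evader_robber /capture !ffunE -/(covered _ r0).
  by rewrite (negbTE (evading_uncovered ev0)).
have [c'v escape] := evading_step ev_v (moves n).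
have [_ /(_ escape) [c'v' ev_v']] := evade_spec (evader_cops n.+1) v.
exists (evade (evader_cops n.+1) v) => //.
by rewrite evader_robberS ffunE Rv /evader_move (negbTE c'v) (negbTE c'v').
Qed.

End EvasionPlay.

Lemma winning_catches_all (s : cop_strategy T k 1) : winning e s -> catches_all (s [::]).
Proof.
move=> s_win r0; apply: NNPP => no_catch.
have ev0 : evading (s [::]) r0.
  by move=> n; apply/negP=> catch; apply: no_catch; exists n.
have [moves [N caught]] := s_win _ _ (evader_consistent s r0).
have [v _] := evader_survives ev0 (fun n => introT (cop_moveP _ _) (moves n)) N.
by rewrite caught.
Qed.

Section Chase.
Hypothesis catches_everywhere : forall c : cops, catches_all c.
Variable m : nat.

Definition rank (c : cops) (v : T) : nat := ex_minn (catches_everywhere c v).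

Lemma rank_gt0 c v : 0 < rank c v.
Proof. by rewrite /rank; case: ex_minnP => [[|n]]. Qed.

Lemma rank_min n c v : catch_within n c v -> rank c v <= n.
Proof. by rewrite /rank; case: ex_minnP => r _; apply. Qed.

Definition chase (c : cops) (v : T) : cops :=
  odflt c [pick c' | cop_moveb c c' && (covered c' v ||
    [forall r', adj e v r' ==> covered c' r' || catch_within (rank c v).-1 c' r'])].

Lemma chase_spec c v : cop_moveb c (chase c v) && (covered (chase c v) v ||
    [forall r', adj e v r' ==>
       covered (chase c v) r' || catch_within (rank c v).-1 (chase c v) r']).
Proof.
rewrite /chase; case: pickP => [c' // | no_move]; exfalso.
have : catch_within (rank c v) c v by rewrite /rank; case: ex_minnP.
move: no_move (rank_gt0 c v); case: (rank c v) => [|n] // no_move _.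
rewrite catch_within_succ => /existsP [c' move_c'].
by move: (no_move c') => /negbT /negP; apply.
Qed.

Definition first_free (r : rob_pos T m) : option 'I_m := [pick j | r j != None].

Definition chase_first (c : cops) (r : rob_pos T m) : cops :=
  if first_free r is Some j then (if r j is Some v then chase c v else c) else c.

Definition chase_strategy (c0 : cops) : cop_strategy T k m :=
  fun h => if h is x :: h' then chase_first (last x h').1 (last x h').2 else c0.

Section ChasePlay.
Variables (c0 : cops) (C : nat -> cops) (R : nat -> rob_pos T m).
Hypothesis play : consistent e (chase_strategy c0) C R.

Lemma chase_play_cops n : C n.+1 = chase_first (C n) (R n).
Proof.
case: play => C_s _ _; rewrite C_s history_succ.
by case: (history C R n) => [|x h] //=; rewrite last_rcons.
Qed.

Lemma chase_play_moves n : cop_moveb (C n) (C n.+1).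
Proof.
rewrite chase_play_cops /chase_first.
case: first_free => [j|]; last exact: cop_moveb_refl.
by case: (R n j) => [v|]; [case/andP: (chase_spec (C n) v) | exact: cop_moveb_refl].
Qed.

Lemma chase_play_robbers n : rob_step e (C n.+1) (R n) (R n.+1).
Proof. by case: play. Qed.

Definition free n : {set 'I_m} := [set j | R n j != None].

Lemma freeE n j : (j \in free n) = (R n j != None).
Proof. by rewrite inE. Qed.

Lemma free_subset n : free n.+1 \subset free n.
Proof.
apply/subsetP=> j; rewrite !inE; apply: contra => /eqP Rj.
by have := chase_play_robbers n j; rewrite /capture ffunE Rj => ->.
Qed.

Lemma first_freeP n : (forall j, R n j = None) \/
  exists j v, first_free (R n) = Some j /\ R n j = Some v.
Proof.
rewrite /first_free; case: pickP => [j|none]; last first.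
  by left=> j; apply/eqP/negPn; rewrite none.
by case Rj: (R n j) => [v|] // _; right; exists j, v.
Qed.

Lemma chase_progress n j v :
  first_free (R n) = Some j -> R n j = Some v ->
  free n.+1 \proper free n \/
  exists2 v', first_free (R n.+1) = Some j /\ R n.+1 j = Some v' &
              rank (C n.+1) v' < rank (C n) v.
Proof.
move=> first_j Rj; case: (eqVproper (free_subset n)) => [same|]; last by left.
right.
have first_j' : first_free (R n.+1) = Some j.
  by rewrite -first_j; apply: eq_pick => i; rewrite -!freeE same.
have Cn1 : C n.+1 = chase (C n) v by rewrite chase_play_cops /chase_first first_j Rj.
have free_j : R n.+1 j != None by rewrite -freeE same freeE Rj.
have := chase_play_robbers n j; rewrite /capture ffunE Rj -/(covered _ v).
case: ifP => [_ Rj'|cv [v' [adj_v' Rj']]]; first by rewrite Rj' in free_j.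
move: Rj'; rewrite -/(covered _ v').
case: ifP => [_ Rj'|cv' Rj']; first by rewrite Rj' in free_j.
exists v' => //.
have /andP [_] := chase_spec (C n) v; rewrite -Cn1 cv /= => /forallP /(_ v').
rewrite adj_v' cv' /= => /rank_min catch.
by apply: leq_ltn_trans catch _; rewrite prednK ?rank_gt0.
Qed.

Lemma chase_play_ends : exists n, forall j, R n j = None.
Proof.
suff ind a n : #|free n| <= a -> exists n', forall j, R n' j = None by exact: (ind _ 0).
elim: a n => [|a IHa] n.
  rewrite leqn0 cards_eq0 => /eqP free0; exists n => j.
  by apply/eqP/negPn; rewrite -freeE free0 inE.
move=> card_n.
suff ind b n' : #|free n'| <= a.+1 ->
    (forall j v, first_free (R n') = Some j -> R n' j = Some v -> rank (C n') v <= b) ->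
    exists n'', forall j, R n'' j = None.
  case: (first_freeP n) => [dead|[j [v [first_j Rj]]]]; first by exists n.
  apply: (ind (rank (C n) v) n card_n) => j' v'.
  by rewrite first_j => -[<-]; rewrite Rj => -[<-].
elim: b n' => [|b IHb] n' card_n' rank_le.
all: case: (first_freeP n') => [dead|[j [v [first_j Rj]]]]; first by exists n'.
  by have := rank_le j v first_j Rj; rewrite leqNgt rank_gt0.
case: (chase_progress first_j Rj) => [lost|[v' [first_j' Rj'] rank_lt]].
  by apply: IHa; rewrite -ltnS; apply: leq_trans (proper_card lost) card_n'.
apply: (IHb n'.+1); first exact: leq_trans (subset_leq_card (free_subset n')) card_n'.
move=> j' v''; rewrite first_j' => -[<-]; rewrite Rj' => -[<-].
by rewrite -ltnS; apply: leq_trans rank_lt (rank_le j v first_j Rj).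
Qed.

End ChasePlay.

Lemma chase_strategy_winning c0 : winning e (chase_strategy c0).
Proof.
move=> C R play; split; last exact: chase_play_ends play.
by move=> n; apply/cop_moveP; exact: chase_play_moves play n.
Qed.

End Chase.

End FixedCops.
End CopsAndRobbers.

Theorem mainTheorem1 (T : finType) (e : rel T)
  (e_sym : symmetric e) (e_irr : irreflexive e)
  (e_conn : forall x y : T, connect e x y)
  (k m : nat) (hk : 1 <= k) (hm : 1 <= m) :
  cops_win e k m <-> cops_win e k 1.
Proof.
split; first exact: cops_win_one_robber.
case=> s s_win.
have catches := catches_all_everywhere e_conn (winning_catches_all s_win).
by exists (chase_strategy catches (s [::])); exact: chase_strategy_winning.
Qed.
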